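(* Let $V$ be a finite nonempty set and $f:\{0,1\}^V\to\{0,1\}^V$ an and-net. (1) Every subnetwork of $f$ has a unique fixed point if and only if every chordless cycle of $G(f)$ has a delocalizing vertex. (2) Every subnetwork of $f$ has at most one fixed point if and only if every chordless positive cycle of $G(f)$ has a delocalizing vertex.
   Context: For nonempty $I\subseteq V$ and $z\in\{0,1\}^{V\setminus I}$, the subnetwork of $f$ induced by $z$ is $h:\{0,1\}^I\to\{0,1\}^I$ with $h(x|_I)=f(x)|_I$ for all $x$ whose restriction to $V\setminus I$ is $z$ ($f$ is a subnetwork of itself). For $x^{j\alpha}$ the point equal to $x$ except its $j$-component is $\alpha$, the global interaction graph $G(f)$ is the signed digraph on $V$ with a positive (resp. negative) arc from $j$ to $i$ iff $f_i(x^{j1})-f_i(x^{j0})=1$ (resp. $=-1$) for at least one $x$. $f$ is an and-net if $G(f)$ has at most one arc from $j$ to $i$ for all $i,j$ and for every $i$ and $x$: $f_i(x)=1$ iff $G(f)$ has no positive arc $j\to i$ with $x_j=0$ and no negative arc $j\to i$ with $x_j=1$. A cycle is a subgraph whose underlying unsigned digraph is a directed cycle (loops are cycles of length 1); positive if it has an even number of negative arcs; chordless if its underlying unsigned digraph is an induced subgraph of that of $G(f)$. A vertex $v$ (possibly on $C$) is a delocalizing vertex of a cycle $C$ if $G(f)$ has a positive arc from $v$ to a vertex of $C$ and a negative arc from $v$ to a different vertex of $C$. *)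

From mathcomp Require Import all_boot.
Set Implicit Arguments. Unset Strict Implicit. Unset Printing Implicit Defensive.

Section BN.
Variable V : finType.

Definition config := {ffun V -> bool}.
Definition network := config -> config.

Definition upd (x : config) (j : V) (a : bool) : config :=
  [ffun k => if k == j then a else x k].

Definition pos_arc (f : network) (j i : V) : bool :=
  [exists x : config, f (upd x j true) i && ~~ f (upd x j false) i].
Definition neg_arc (f : network) (j i : V) : bool :=
  [exists x : config, ~~ f (upd x j true) i && f (upd x j false) i].
Definition arc (f : network) (j i : V) : bool := pos_arc f j i || neg_arc f j i.

Definition and_net (f : network) : Prop :=
  (forall i j, ~~ (pos_arc f j i && neg_arc f j i)) /\
  (forall (x : config) i,
     f x i = [forall j, ~~ (pos_arc f j i && ~~ x j) && ~~ (neg_arc f j i && x j)]).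

(* Subnetworks.  For I : {set V}, points of {0,1}^I are finite functions on
   the subtype {v | v \in I}; z in {0,1}^(V \ I) is a finite function on
   {v | v \in ~: I}. *)
Definition ext (I : {set V}) (z : {ffun {v : V | v \in ~: I} -> bool})
    (y : {ffun {v : V | v \in I} -> bool}) : config :=
  [ffun v : V =>
     if @insub V (fun v => v \in I) _ v is Some u then y u
     else if @insub V (fun v => v \in ~: I) _ v is Some w then z w else false].

Definition subnet (f : network) (I : {set V})
    (z : {ffun {v : V | v \in ~: I} -> bool}) :
    {ffun {v : V | v \in I} -> bool} -> {ffun {v : V | v \in I} -> bool} :=
  fun y => [ffun u => f (ext z y) (val u)].

(* A cycle of G(f) is given by the nonempty duplicate-free sequence of its
   vertices c = [:: v0; ...; v(k-1)] with an arc v_t -> v_(t+1 mod k)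
   (loops are cycles of length 1).  In an and-net there is at most one arc
   between two vertices, so the sign of each arc is determined. *)
Definition is_cycle (f : network) (c : seq V) : bool :=
  [&& c != [::], uniq c & cycle (arc f) c].

Definition positive_cycle (f : network) (c : seq V) : bool :=
  ~~ odd (count (fun u => neg_arc f u (next c u)) c).

Definition chordless (f : network) (c : seq V) : bool :=
  [forall u, forall v, (u \in c) && (v \in c) && arc f u v ==> (v == next c u)].

Definition delocalizing (f : network) (c : seq V) (v : V) : bool :=
  [exists a, exists b, [&& a \in c, b \in c, a != b, pos_arc f v a & neg_arc f v b]].

End BN.

From Pilot Require Import Defs.
From mathcomp Require Import all_boot.
Set Implicit Arguments. Unset Strict Implicit. Unset Printing Implicit Defensive.

(* Both equivalences go through minimal counterexamples.  If a chordless cycle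
   [c] has no delocalizing vertex, every vertex off [c] can be set so as to
   satisfy all its arcs into [c]; the subnetwork on [c] is then a ring of
   literals, with no fixed point when [c] is negative and two when it is
   positive.  Conversely, take [I] minimal such that the subnetwork on [I] has
   two fixed points (resp. none, while all subnetworks have at most one).
   Minimality forces every vertex of [I] to have exactly one in-neighbour in
   [I]: with two fixed points by a Knaster-Tarski argument on mixtures of
   them, with none by a parity argument on fixed points of [I] minus one
   pinned vertex.  The in-neighbour map then traces a chordless cycle spanning
   [I] without delocalizing vertex, positive in the first case. *)

Lemma odd_count_neq (T : eqType) (a b : pred T) (s : seq T) :
  odd (count (fun u => a u != b u) s) = odd (count a s) (+) odd (count b s).
Proof.
elim: s => //= u s IH; rewrite !oddD IH.
by case: (a u); case: (b u); case: (odd (count a s)); case: (odd (count b s)).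
Qed.

Lemma count_next (T : eqType) (a : pred T) (c : seq T) : uniq c ->
  count (fun u => a (next c u)) c = count a c.
Proof.
move=> Uc; rewrite -(count_map (next c)); apply/permP/uniq_perm => //.
  by rewrite map_inj_uniq //; exact: (can_inj (prev_next Uc)).
move=> x; apply/mapP/idP => [[y yc ->]|xc]; first by rewrite mem_next.
by exists (prev c x); rewrite ?mem_prev // next_prev.
Qed.

Lemma even_count_change_next (T : eqType) (r : pred T) (c : seq T) : uniq c ->
  ~~ odd (count (fun u => r u != r (next c u)) c).
Proof.
by move=> Uc; rewrite odd_count_neq (count_next r Uc) addbb.
Qed.

Lemma odd_count_take_next (T : eqType) (s : pred T) (c : seq T) (u : T) :
  uniq c -> u \in c -> ~~ odd (count s c) ->
  odd (count s (take (index (next c u) c) c))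
    = odd (count s (take (index u c) c)) (+) s u.
Proof.
move=> Uc uc even_s.
have take_succ : take (index u c).+1 c = rcons (take (index u c) c) u.
  by rewrite (take_nth u) ?nth_index ?index_mem.
case: c Uc uc even_s take_succ => [//|y c'] Uc uc even_s take_succ.
rewrite next_nth uc.
have : index u (y :: c') <= size c' by rewrite -ltnS index_mem.
rewrite leq_eqVlt => /orP[/eqP u_last | u_inner].
  rewrite nth_default ?u_last //= eqxx /=.
  move: even_s; rewrite -{1}(take_size (y :: c')) [size _]/= -u_last take_succ.
  by rewrite -cats1 count_cat /= addn0 oddD; case: (s u); case: (odd _).
have -> : index (nth y c' (index u (y :: c'))) (y :: c') = (index u (y :: c')).+1.
  by rewrite -[nth y c' _]/(nth y (y :: c') (index u (y :: c')).+1) index_uniq.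
by rewrite take_succ -cats1 count_cat /= addn0 oddD; case: (s u).
Qed.

Lemma proper_ind (T : finType) (P : {set T} -> Prop) :
  (forall I : {set T}, (forall J : {set T}, J \proper I -> P J) -> P I) ->
  forall I : {set T}, P I.
Proof.
move=> IH I; have [n] := ubnP #|I|; elim: n I => // n IHn I /ltnSE leIn.
by apply: IH => J JI; apply: IHn; exact: leq_trans (proper_card JI) leIn.
Qed.

Lemma exists_prev_cycle (T : finType) (I : {set T}) (q : T -> T) :
  I != set0 -> {in I, forall v, q v \in I} ->
  exists c : seq T,
    [/\ uniq c, c != [::], {subset c <= I} & {in c, forall a, q a = prev c a}].
Proof.
move=> /set0Pn [v0 v0I] qI.
have [x xI xmin] : exists2 x, x \in I & forall y, y \in I -> order q x <= order q y.
  by case: (@arg_minnP _ v0 (mem I) (order q) v0I) => y yI ymin; exists y.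
have cyc : fcycle q (orbit q x).
  case: (orderPcycle q x) => // _ E.
  by have := xmin (q x) (qI _ xI); rewrite E ltnn.
have orbit_sub : {subset orbit q x <= I}.
  move=> y; rewrite -fconnect_orbit => /iter_findex <-.
  by elim: (findex q x y) => //= n IH; apply: qI.
exists (rev (orbit q x)); split.
- by rewrite rev_uniq orbit_uniq.
- by rewrite -size_eq0 size_rev size_orbit -lt0n order_gt0.
- by move=> y; rewrite mem_rev; apply: orbit_sub.
- by move=> a; rewrite mem_rev => ao; rewrite prev_rev ?orbit_uniq // (nextE cyc ao).
Qed.

(* [arc] of path.v would otherwise shadow the arcs of [G(f)]. *)
Local Notation arc := Defs.arc.

Section AndNet.
Variables (V : finType) (f : network V).
Hypothesis f_and : and_net f.

Definition lit (j i : V) (x : config V) : bool :=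
  ~~ (pos_arc f j i && ~~ x j) && ~~ (neg_arc f j i && x j).

Lemma and_netE x i : f x i = [forall j, lit j i x].
Proof. by case: f_and => _ ->. Qed.

Lemma lit_true x i : f x i -> forall j, lit j i x.
Proof. by rewrite and_netE => /forallP. Qed.

Lemma lit_false x i : f x i = false -> exists j, ~~ lit j i x.
Proof. by rewrite and_netE => /negbT/forallPn. Qed.

Lemma lit_noarc j i x : ~~ arc f j i -> lit j i x.
Proof. by rewrite /arc negb_or /lit => /andP[/negbTE-> /negbTE->]. Qed.

Lemma eq_lit j i (x y : config V) : x j = y j -> lit j i x = lit j i y.
Proof. by rewrite /lit => ->. Qed.

Lemma pos_neg_arcF j i : pos_arc f j i -> neg_arc f j i = false.
Proof. by case: f_and => + _ => /(_ i j); case: pos_arc; case: neg_arc. Qed.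

Lemma litE j i x : arc f j i -> lit j i x = x j (+) neg_arc f j i.
Proof.
case: f_and => /(_ i j) + _; rewrite /arc /lit.
by case: (pos_arc f j i); case: (neg_arc f j i); case: (x j).
Qed.

Lemma lit_change x y j i : lit j i x -> ~~ lit j i y -> (x j != y j) && arc f j i.
Proof.
move=> Lx Ly; apply/andP; split.
  by apply/negP => /eqP E; move: Ly; rewrite -(eq_lit i E) Lx.
by apply: contraNT Ly => /(lit_noarc y)->.
Qed.

(* A fixed point of the subnetwork on [I] induced by [z] is handled as the
   full configuration [ext z y]: it agrees with [z] off [I] and is fixed on [I]. *)
Definition agree (I : {set V}) (x y : config V) := forall v, v \notin I -> x v = y v.
Definition fixed_on (I : {set V}) (x : config V) := forall i, i \in I -> f x i = x i.

Section Restriction.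
Variable I : {set V}.
Implicit Types (z : {ffun {v : V | v \in ~: I} -> bool})
               (y : {ffun {v : V | v \in I} -> bool}).

Definition proj_in (x : config V) : {ffun {v : V | v \in I} -> bool} :=
  [ffun u => x (val u)].
Definition proj_out (x : config V) : {ffun {v : V | v \in ~: I} -> bool} :=
  [ffun w => x (val w)].

Lemma ext_in z y (u : {v : V | v \in I}) : ext z y (val u) = y u.
Proof. by rewrite /ext ffunE valK. Qed.

Lemma ext_out z y (w : {v : V | v \in ~: I}) : ext z y (val w) = z w.
Proof.
rewrite /ext ffunE insubF; first by rewrite valK.
by have := valP w; rewrite inE => /negbTE.
Qed.

Lemma ext_inj z : injective (ext z).
Proof. by move=> y1 y2 E; apply/ffunP => u; rewrite -(ext_in z y1) E ext_in. Qed.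

Lemma proj_out_ext z y : proj_out (ext z y) = z.
Proof. by apply/ffunP => w; rewrite ffunE ext_out. Qed.

Lemma agree_ext z y1 y2 : agree I (ext z y1) (ext z y2).
Proof.
move=> v vI; have vI' : v \in ~: I by rewrite inE.
by rewrite -[v]/(val (exist _ v vI' : {v : V | v \in ~: I})) !ext_out.
Qed.

Lemma ext_proj x x0 : agree I x x0 -> ext (proj_out x0) (proj_in x) = x.
Proof.
move=> A; apply/ffunP => v; rewrite /ext ffunE.
case: insubP => [u _ <-|vI]; first by rewrite ffunE.
case: insubP => [w _ <-|]; last by rewrite inE vI.
by rewrite ffunE A // -in_setC (valP w).
Qed.

Lemma subnet_fixed z y : subnet f z y = y <-> fixed_on I (ext z y).
Proof.
split=> [E i iI | F].
  by rewrite -[i]/(val (exist _ i iI : {v : V | v \in I})) ext_in -{2}E ffunE.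
by apply/ffunP => u; rewrite ffunE F ?ext_in ?(valP u).
Qed.

End Restriction.

Lemma agree_refl I x : agree I x x.
Proof. by []. Qed.

Lemma agree_sym I x y : agree I x y -> agree I y x.
Proof. by move=> A v /A. Qed.

Lemma agree_trans I x y w : agree I x y -> agree I y w -> agree I x w.
Proof. by move=> A B v vI; rewrite A ?B. Qed.

Lemma agree_set0 x y : agree set0 x y -> x = y.
Proof. by move=> A; apply/ffunP => v; rewrite A ?inE. Qed.

Definition unique_fixed := forall I x1 x2,
  agree I x1 x2 -> fixed_on I x1 -> fixed_on I x2 -> x1 = x2.
Definition exists_fixed := forall I x0, exists2 x, agree I x x0 & fixed_on I x.

Lemma unique_fixedP : unique_fixed <->
  (forall (I : {set V}) (z : {ffun {v : V | v \in ~: I} -> bool}), I != set0 ->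
     forall y1 y2, subnet f z y1 = y1 -> subnet f z y2 = y2 -> y1 = y2).
Proof.
split=> [U I z _ y1 y2 /subnet_fixed F1 /subnet_fixed F2 | U I x1 x2 A F1 F2].
  exact/(ext_inj (U _ _ _ (agree_ext _ _ _) F1 F2)).
have [I0|I0] := eqVneq I set0; first by apply: agree_set0; rewrite -I0.
have E1 := ext_proj (@agree_refl I x1); have E2 := ext_proj (agree_sym A).
rewrite -E1 -E2; congr ext.
by apply: (U I (proj_out I x1) I0); apply/subnet_fixed; rewrite ?E1 ?E2.
Qed.

Lemma exists_fixedP : exists_fixed <->
  (forall (I : {set V}) (z : {ffun {v : V | v \in ~: I} -> bool}), I != set0 ->
     exists y, subnet f z y = y).
Proof.
split=> [Ex I z _ | Ex I x0].
  have [x A F] := Ex I (ext z [ffun _ => false]).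
  by exists (proj_in I x); apply/subnet_fixed; rewrite -[z](proj_out_ext z [ffun=> false]) ext_proj.
have [->|I0] := eqVneq I set0; first by exists x0 => // i; rewrite inE.
have [y /subnet_fixed F] := Ex I (proj_out I x0) I0.
exists (ext (proj_out I x0) y) => //.
by rewrite -{2}(ext_proj (@agree_refl I x0)); apply: agree_ext.
Qed.

Section ChordlessCycle.
Variable c : seq V.
Hypotheses (c_cycle : is_cycle f c) (c_chordless : chordless f c)
           (c_local : forall v, ~~ delocalizing f c v).

Lemma cycle_uniq : uniq c. Proof. by case/and3P: c_cycle. Qed.

Lemma cycle_next_arc u : u \in c -> arc f u (next c u).
Proof. by case/and3P: c_cycle => _ _ /next_cycle; apply. Qed.

Lemma chord_next u v : u \in c -> v \in c -> arc f u v -> v = next c u.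
Proof.
move=> uc vc a; move: c_chordless => /forallP/(_ u)/forallP/(_ v).
by rewrite uc vc a => /eqP.
Qed.

(* Off [c], every vertex satisfies the literals of its arcs into [c]: these
   arcs all have the same sign because no vertex is delocalizing. *)
Definition frame : config V := [ffun v => [exists a, (a \in c) && pos_arc f v a]].

Lemma cycle_fE x : agree [set u in c] x frame ->
  forall i, i \in c -> f x i = lit (prev c i) i x.
Proof.
move=> A i ic; rewrite and_netE; apply/forallP/idP => [/(_ (prev c i)) // | lit_prev j].
have [->//|j_prev] := eqVneq j (prev c i).
have [jc|jc] := boolP (j \in c).
  apply: lit_noarc; apply: contra_neqN j_prev => a.
  by rewrite (chord_next jc ic a) prev_next // cycle_uniq.
have [a|] := boolP (arc f j i); last exact: lit_noarc.
rewrite litE // A ?inE // ffunE.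
case/orP: (a) => [pa | na].
  by rewrite pos_neg_arcF // addbF; apply/existsP; exists i; rewrite ic.
rewrite na addbT; apply/existsP => -[b /andP[bc pb]].
have /negP := c_local j; apply; apply/existsP; exists b; apply/existsP; exists i.
rewrite bc ic pb na !andbT /=; apply: contraTneq pb => ->.
by apply/negP => /pos_neg_arcF; rewrite na.
Qed.

Lemma cycle_fixedE x : agree [set u in c] x frame -> fixed_on [set u in c] x ->
  {in c, forall u, neg_arc f u (next c u) = (x u != x (next c u))}.
Proof.
move=> A F u uc; have nc : next c u \in c by rewrite mem_next.
have := F (next c u); rewrite inE nc => /(_ isT).
rewrite cycle_fE // prev_next ?cycle_uniq // litE ?cycle_next_arc // => <-.
by case: (x u); case: neg_arc.
Qed.

Lemma neg_cycle_no_fixed : ~~ positive_cycle f c -> ~ exists_fixed.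
Proof.
move=> neg_c Ex; have [x A F] := Ex [set u in c] frame.
move: neg_c; rewrite /positive_cycle (eq_in_count (cycle_fixedE A F)).
by rewrite even_count_change_next // cycle_uniq.
Qed.

(* On a positive cycle the values [b (+) parity of the negative arcs before v]
   are consistent all around [c], for both choices of [b]. *)
Lemma pos_cycle_two_fixed : positive_cycle f c -> ~ unique_fixed.
Proof.
move=> pos_c U; pose s u := neg_arc f u (next c u).
pose X b : config V :=
  [ffun v => if v \in c then b (+) odd (count s (take (index v c) c)) else frame v].
have X_next b u : u \in c -> X b (next c u) = X b u (+) s u.
  move=> uc; rewrite !ffunE mem_next uc.
  by rewrite odd_count_take_next ?cycle_uniq // addbA.
have X_agree b : agree [set u in c] (X b) frame.
  by move=> v; rewrite inE ffunE => /negbTE ->.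
have X_fixed b : fixed_on [set u in c] (X b).
  move=> i; rewrite inE => ic; rewrite cycle_fE //.
  have [u uc <-] : exists2 u, u \in c & next c u = i.
    by exists (prev c i); rewrite ?mem_prev ?next_prev ?cycle_uniq.
  by rewrite prev_next ?cycle_uniq // X_next // litE ?cycle_next_arc.
have [u uc] : exists u, u \in c.
  by case/and3P: c_cycle; case: (c) => // u c' _ _ _; exists u; rewrite mem_head.
have /ffunP/(_ u) := U _ _ _ (agree_trans (X_agree true) (agree_sym (X_agree false)))
                       (X_fixed true) (X_fixed false).
by rewrite !ffunE uc; case: odd.
Qed.

End ChordlessCycle.

Section InPredecessor.
Variable I : {set V}.
Hypothesis in_pred : {in I, forall v, exists2 j, j \in I & arc f j v}.
Hypothesis in_pred_unique : forall j k v, j \in I -> k \in I -> v \in I ->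
  arc f j v -> arc f k v -> j = k.

Definition pred_in (v : V) : V := odflt v [pick j in I | arc f j v].

Lemma pred_in_spec v : v \in I -> pred_in v \in I /\ arc f (pred_in v) v.
Proof.
move=> vI; rewrite /pred_in; case: pickP => [j /andP[-> ->] //|none].
by case: (in_pred vI) => j jI a; have := none j; rewrite jI a.
Qed.

Lemma pred_inE u v : u \in I -> v \in I -> arc f u v -> u = pred_in v.
Proof. by move=> uI vI a; have [pI pa] := pred_in_spec vI; exact: in_pred_unique pa. Qed.

Lemma pred_in_cycle : I != set0 -> exists c : seq V,
  [/\ uniq c, c != [::], {subset c <= I} & {in c, forall a, pred_in a = prev c a}].
Proof. by move=> I0; apply: exists_prev_cycle => // v /pred_in_spec[]. Qed.

Lemma pred_in_cycle_local (c : seq V) (x : config V) :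
  uniq c -> c != [::] -> c =i I -> {in c, forall a, pred_in a = prev c a} ->
  (forall j v, j \notin I -> v \in I -> lit j v x) ->
  [/\ is_cycle f c, chordless f c & forall v, ~~ delocalizing f c v].
Proof.
move=> Uc c0 cI c_pred lit_out; split.
- rewrite /is_cycle c0 Uc /=; apply: (cycle_from_prev Uc) => a ac.
  by rewrite -c_pred //; case: (pred_in_spec (_ : a \in I)); rewrite -?cI.
- apply/forallP => u; apply/forallP => v; apply/implyP => /andP[/andP[uc vc] a].
  by rewrite (pred_inE _ _ a) -?cI // c_pred // next_prev.
move=> v; apply/negP => /existsP [a /existsP [b /and5P[ac bc ab pa nb]]].
have va : arc f v a by rewrite /arc pa.
have vb : arc f v b by rewrite /arc nb orbT.
have [vI|vI] := boolP (v \in I).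
  have E : prev c a = prev c b.
    by rewrite -!c_pred // -(pred_inE vI _ va) -?cI // -(pred_inE vI _ vb) -?cI.
  by move: ab; rewrite (can_inj (next_prev Uc) E) eqxx.
have := lit_out v a vI; rewrite -cI ac litE // pos_neg_arcF // addbF => /(_ isT) xv.
by have := lit_out v b vI; rewrite -cI bc litE // nb xv => /(_ isT).
Qed.

End InPredecessor.

Section TwoFixedPoints.
Variables (I : {set V}) (x1 x2 : config V).
Hypotheses (x12_diff : forall v, (x1 v != x2 v) = (v \in I))
           (x1_fixed : fixed_on I x1) (x2_fixed : fixed_on I x2)
           (I_min : forall J : {set V}, J \proper I -> forall y1 y2 : config V,
              agree J y1 y2 -> fixed_on J y1 -> fixed_on J y2 -> y1 = y2).

Lemma x2_in v : v \in I -> x2 v = ~~ x1 v.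
Proof. by rewrite -x12_diff; case: (x1 v); case: (x2 v). Qed.

Lemma x2_out v : v \notin I -> x2 v = x1 v.
Proof. by rewrite -x12_diff negbK => /eqP. Qed.

Lemma lit_inside j i : j \in I -> i \in I -> arc f j i -> lit j i x1 = x1 i.
Proof.
move=> jI iI a; case x1i: (x1 i); first by apply: lit_true; rewrite x1_fixed.
have /lit_true/(_ j) : f x2 i by rewrite x2_fixed // x2_in // x1i.
by rewrite !litE // x2_in //; case: (x1 j); case: neg_arc.
Qed.

Lemma lit_outside j i : j \notin I -> i \in I -> lit j i x1.
Proof.
move=> jI iI; case x1i: (x1 i); first by apply: lit_true; rewrite x1_fixed.
by rewrite (eq_lit _ (esym (x2_out jI))); apply: lit_true; rewrite x2_fixed // x2_in // x1i.
Qed.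

Lemma in_pred_two_fixed i : i \in I -> exists2 j, j \in I & arc f j i.
Proof.
move=> iI; case x1i: (x1 i).
  have [|j /(lit_change (lit_true (_ : f x1 i) j))] := @lit_false x2 i.
    by rewrite x2_fixed // x2_in // x1i.
  by rewrite x1_fixed // x1i x12_diff => /(_ isT) /andP[jI a]; exists j.
have [|j /(lit_change (lit_true (_ : f x2 i) j))] := @lit_false x1 i; first by rewrite x1_fixed.
by rewrite x2_fixed // x2_in // x1i eq_sym x12_diff => /(_ isT) /andP[jI a]; exists j.
Qed.

Definition mix (A : {set V}) : config V := [ffun v => if v \in A then x1 v else x2 v].
Definition phi (A : {set V}) : {set V} := [set v in I | f (mix A) v == x1 v].

Lemma mixE A v : mix A v = if v \in A then x1 v else x2 v.
Proof. by rewrite ffunE. Qed.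

Lemma phi_sub A : phi A \subset I.
Proof. by apply/subsetP => v; rewrite inE => /andP[]. Qed.

Lemma phi_mono : {homo phi : A B / A \subset B}.
Proof.
move=> A B AB; apply/subsetP => v; rewrite !inE => /andP[vI /eqP E]; rewrite vI /=.
have mix_AB w : w \in B -> w \notin A -> (mix A w, mix B w) = (x2 w, x1 w).
  by move=> wB wA; rewrite !mixE wB (negbTE wA).
have mix_eq w : ~~ ((w \in B) && (w \notin A)) -> mix A w = mix B w.
  rewrite !mixE; case: (boolP (w \in A)) => [/(subsetP AB)-> //|_].
  by rewrite andbT => /negbTE ->.
apply/eqP; case x1v: (x1 v); rewrite x1v in E.
  rewrite and_netE; apply/forallP => w; have := lit_true E w.
  case: (boolP ((w \in B) && (w \notin A))) => [/andP[wB wA] _ | /mix_eq/eq_lit->//].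
  case: (mix_AB w wB wA) => _ /eq_lit->; apply: lit_true; rewrite x1_fixed //.
have [w Lw] := lit_false E; apply/negbTE; rewrite and_netE; apply/forallPn; exists w.
case: (boolP ((w \in B) && (w \notin A))) => [/andP[wB wA] | /mix_eq/eq_lit<-//].
have : lit w v x2 by apply: lit_true; rewrite x2_fixed // x2_in // x1v.
by case: (mix_AB w wB wA) => /eq_lit<- _; rewrite (negbTE Lw).
Qed.

Lemma mix_fixed A (J : {set V}) : J \subset I -> {in J, forall v, (v \in phi A) = (v \in A)} ->
  fixed_on J (mix A).
Proof.
move=> JI H v vJ; have vI := subsetP JI _ vJ.
have := H v vJ; rewrite mixE inE vI /= => <-.
by case: eqP => // /eqP; rewrite x2_in //; case: (f _ v); case: (x1 v).
Qed.

(* [Y] grows to a fixed point [Z] of [A |-> Y :|: (phi A :\ i)]; then [mix Z] is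
   fixed on [I :\ i], hence equal to [x2] by minimality, yet agrees with [x1]
   on [Z]. *)
Lemma phi_post_fixed_set0 i (Y : {set V}) : i \in I -> Y \subset phi Y :\ i -> Y = set0.
Proof.
move=> iI Y_post; pose g A := Y :|: (phi A :\ i).
have g_mono : {homo g : A B / A \subset B}.
  by move=> A B AB; rewrite /g setUS // setSD // phi_mono.
have gZ := fixsetK g_mono; set Z := fixset g in gZ.
have YZ : Y \subset Z by rewrite -gZ subsetUl.
have phiZ : phi Z :\ i = Z.
  apply/eqP; rewrite eqEsubset -{2}gZ subsetUr /= -{1}gZ subUset subxx andbT.
  exact: subset_trans Y_post (setSD _ (phi_mono YZ)).
have ZI : Z \subset I by rewrite -phiZ; apply: subset_trans (subD1set _ _) (phi_sub _).
have mixZ : mix Z = x2.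
  apply: (I_min (properD1 iI)).
  - move=> v; rewrite in_setD1 negb_and negbK => /orP[/eqP->|vI].
      by rewrite mixE -phiZ !inE eqxx.
    by rewrite mixE; case: ifP => // /(subsetP ZI); rewrite (negbTE vI).
  - by apply: mix_fixed; [exact: subD1set | move=> v /setD1P[vi _]; rewrite -{2}phiZ in_setD1 vi].
  - by move=> v /setD1P[_ vI]; apply: x2_fixed.
apply/setP => v; rewrite inE; apply/negbTE/negP => vY.
have vZ := subsetP YZ v vY; move/ffunP/(_ v): mixZ; rewrite ffunE vZ.
by apply/eqP; rewrite x12_diff (subsetP ZI).
Qed.

Section InDegree.
Variable i : V.
Hypotheses (iI : i \in I) (x1i : x1 i).

Definition lk_step (k : V) (A : {set V}) : {set V} := phi (k |: A) :\ k :\ i.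
Definition lk (k : V) : {set V} := fixset (lk_step k).

Lemma lk_fixed k : lk_step k (lk k) = lk k.
Proof. by apply: fixsetK => A B AB; rewrite /lk_step !setSD // phi_mono // setUS. Qed.

Lemma lk_sub_phi k : lk k \subset phi (k |: lk k).
Proof. by rewrite -{1}lk_fixed /lk_step; apply: subset_trans (subD1set _ _) (subD1set _ _). Qed.

Lemma lk_sub k : lk k \subset I.
Proof. exact: subset_trans (lk_sub_phi k) (phi_sub _). Qed.

Lemma notin_lk k : i \notin lk k.
Proof. by rewrite -lk_fixed /lk_step !inE eqxx. Qed.

(* Otherwise [mix (k |: lk k)] would be a fixed point on [I :\ k] distinct
   from [x1] at [j]. *)
Lemma in_lk j k : j \in I -> k \in I -> arc f j i -> j != k -> j \in lk k.
Proof.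
move=> jI kI ji jk; apply/negPn/negP => jL.
have mix_j : mix (k |: lk k) j = x2 j by rewrite mixE in_setU1 (negbTE jk) (negbTE jL).
suff : mix (k |: lk k) = x1 by move/ffunP/(_ j); rewrite mix_j; apply/eqP; rewrite eq_sym x12_diff.
apply: (I_min (properD1 kI)).
- move=> v; rewrite in_setD1 negb_and negbK => /orP[/eqP->|vI]; first by rewrite mixE setU11.
  have vk : v != k by apply: contraNneq vI => ->.
  have vL : v \notin lk k by apply: contraNN vI; apply: (subsetP (lk_sub k)).
  by rewrite mixE in_setU1 (negbTE vk) (negbTE vL) x2_out.
- apply: mix_fixed; first exact: subD1set.
  move=> v; rewrite in_setD1 => /andP[vk vI].
  case: (eqVneq v i) vk => [-> ik | vi vk].
    rewrite in_setU1 (negbTE (notin_lk k)) (negbTE ik).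
    rewrite inE iI x1i eqb_id /=; apply/negbTE/negP => /lit_true/(_ j).
    rewrite (eq_lit _ mix_j) litE // x2_in //.
    by have := lit_inside jI iI ji; rewrite litE // x1i; case: (x1 j); case: neg_arc.
  by rewrite in_setU1 (negbTE vk) -{2}lk_fixed !in_setD1 vk vi.
- by move=> v /setD1P[_ vI]; apply: x1_fixed.
Qed.

Lemma in_pred_unique_true j k : j \in I -> k \in I -> arc f j i -> arc f k i -> j = k.
Proof.
move=> jI kI ji ki; apply/eqP/negPn/negP => jk.
have jL := in_lk jI kI ji jk; have kL : k \in lk j by rewrite in_lk // eq_sym.
have Y_post : lk k :|: lk j \subset phi (lk k :|: lk j) :\ i.
  apply/subsetP => v vY; rewrite in_setD1; apply/andP; split.
    by apply: contraTneq vY => ->; rewrite in_setU negb_or !notin_lk.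
  case/setUP: vY => [/(subsetP (lk_sub_phi k))|/(subsetP (lk_sub_phi j))];
    apply/subsetP/phi_mono; rewrite subUset sub1set !inE ?kL ?jL ?orbT.
    exact: subsetUl.
  exact: subsetUr.
by move/setP/(_ j): (phi_post_fixed_set0 iI Y_post); rewrite !inE jL.
Qed.

End InDegree.
End TwoFixedPoints.

Section TwoFixedCycle.
Variables (I : {set V}) (x1 x2 : config V).
Hypotheses (x12_diff : forall v, (x1 v != x2 v) = (v \in I))
           (x1_fixed : fixed_on I x1) (x2_fixed : fixed_on I x2)
           (I_min : forall J : {set V}, J \proper I -> forall y1 y2 : config V,
              agree J y1 y2 -> fixed_on J y1 -> fixed_on J y2 -> y1 = y2).

Lemma in_pred_unique_two_fixed j k v : j \in I -> k \in I -> v \in I ->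
  arc f j v -> arc f k v -> j = k.
Proof.
move=> jI kI vI; case x1v: (x1 v).
  exact: (in_pred_unique_true x12_diff x1_fixed x2_fixed I_min vI x1v jI kI).
have x21_diff w : (x2 w != x1 w) = (w \in I) by rewrite eq_sym.
have x2v : x2 v by rewrite (x2_in x12_diff) // x1v.
exact: (in_pred_unique_true x21_diff x2_fixed x1_fixed I_min vI x2v jI kI).
Qed.

Let in_pred := in_pred_two_fixed x12_diff x1_fixed x2_fixed.
Let pred_in_I := pred_inE in_pred in_pred_unique_two_fixed.

(* If the predecessor cycle [c] missed a vertex of [I], switching [x1] to [x2]
   on [c] alone would give a second fixed point on the proper subset [c]. *)
Lemma pred_cycle_spans (c : seq V) : c != [::] -> {subset c <= I} ->
  {in c, forall a, pred_in I a = prev c a} -> c =i I.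
Proof.
move=> c0 cI c_pred v; apply/idP/idP => [/cI //|vI]; apply: contraT => vc.
pose y : config V := [ffun u => if u \in c then x2 u else x1 u].
have cI' : [set u in c] \subset I by apply/subsetP => u; rewrite inE; apply: cI.
have [u uc] : exists u, u \in c by case: (c) c0 => // u c' _; exists u; rewrite mem_head.
suff /ffunP/(_ u) : x1 = y by rewrite /y ffunE uc => E; move: (cI u uc); rewrite -x12_diff E eqxx.
apply: (I_min (J := [set u in c])).
- rewrite properEneq cI' andbT.
  by apply: contraNneq vc => cE; move: vI; rewrite -cE inE.
- by move=> w; rewrite inE ffunE => /negbTE->.
- by move=> w /(subsetP cI'); apply: x1_fixed.
move=> t; rewrite inE => tc; rewrite ffunE tc -x2_fixed ?cI // !and_netE.
apply: eq_forallb => j; have [a|na] := boolP (arc f j t); last by rewrite !lit_noarc.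
apply: eq_lit; rewrite ffunE; case: ifP => // jc.
have [jI|jI] := boolP (j \in I); last by rewrite (x2_out x12_diff jI).
by move: jc; rewrite (pred_in_I jI (cI _ tc) a) c_pred ?mem_prev ?tc.
Qed.

Lemma two_fixed_cycle : I != set0 -> exists c : seq V,
  [/\ is_cycle f c, positive_cycle f c, chordless f c & forall v, ~~ delocalizing f c v].
Proof.
move=> I0; have [c [Uc c0 cI c_pred]] := pred_in_cycle in_pred I0.
have cIe := pred_cycle_spans c0 cI c_pred.
have [c_cycle c_chordless c_local] :=
  pred_in_cycle_local in_pred in_pred_unique_two_fixed Uc c0 cIe c_pred
    (lit_outside x12_diff x1_fixed x2_fixed).
exists c; split => //; rewrite /positive_cycle.
rewrite (@eq_in_count _ _ (fun u => x1 u != x1 (next c u))) ?even_count_change_next //.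
move=> u uc; have nc : next c u \in c by rewrite mem_next.
have := lit_inside x12_diff x1_fixed x2_fixed (cI _ uc) (cI _ nc) (cycle_next_arc c_cycle uc).
by rewrite litE ?cycle_next_arc // => <-; case: (x1 u); case: neg_arc.
Qed.

End TwoFixedCycle.

Section NoFixedPoint.
Variables (I : {set V}) (x0 : config V).
Hypotheses (f_uniq : unique_fixed)
           (I_none : forall x, agree I x x0 -> ~ fixed_on I x)
           (I_min : forall J : {set V}, J \proper I -> forall y0 : config V,
              exists2 y, agree J y y0 & fixed_on J y).

Definition pinned_fixed (v : V) (a0 a1 : config V) :=
  [/\ agree (I :\ v) a0 (upd x0 v false), fixed_on (I :\ v) a0,
      agree (I :\ v) a1 (upd x0 v true) & fixed_on (I :\ v) a1].

Lemma pinned_fixed_exists v : v \in I -> exists a0 a1, pinned_fixed v a0 a1.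
Proof.
move=> vI; have Iv := properD1 vI.
have [a0 ? ?] := I_min Iv (upd x0 v false); have [a1 ? ?] := I_min Iv (upd x0 v true).
by exists a0, a1.
Qed.

Section Pinned.
Variables (v : V) (a0 a1 : config V).
Hypotheses (vI : v \in I) (a_pinned : pinned_fixed v a0 a1).

Lemma pinned_at : a0 v = false /\ a1 v = true.
Proof. by case: a_pinned => A0 _ A1 _; rewrite A0 ?A1 ?ffunE ?eqxx // !inE eqxx. Qed.

Lemma pinned_out w : w \notin I -> a0 w = x0 w /\ a1 w = x0 w.
Proof.
move=> wI; case: a_pinned => A0 _ A1 _.
have wv : (w == v) = false by apply: contraNF wI => /eqP->.
by rewrite A0 ?A1 ?ffunE ?wv // in_setD1 negb_and wI orbT.
Qed.

Lemma pinned_not_fixed a : agree (I :\ v) a (upd x0 v (a v)) -> fixed_on (I :\ v) a ->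
  f a v <> a v.
Proof.
move=> A F E; apply: (I_none (x := a)).
  move=> w wI; have wv : (w == v) = false by apply: contraNF wI => /eqP->.
  by rewrite A ?ffunE ?wv // in_setD1 negb_and wI orbT.
by move=> i iI; have [->//|iv] := eqVneq i v; apply: F; rewrite in_setD1 iv.
Qed.

Lemma f_pinned0 : f a0 v.
Proof.
case: a_pinned => A0 F0 _ _; have [a0v _] := pinned_at.
by apply: contraT => /negbTE; have := @pinned_not_fixed a0; rewrite a0v => /(_ A0 F0).
Qed.

Lemma f_pinned1 : f a1 v = false.
Proof.
case: a_pinned => _ _ A1 F1; have [_ a1v] := pinned_at.
by apply: negbTE; apply/negP; have := @pinned_not_fixed a1; rewrite a1v => /(_ A1 F1).
Qed.

(* Were [a0 w = a1 w], a fixed point on the proper subset [D] where they differ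
   extending [a0] would, by uniqueness on [D :\ v], be [a0] or [a1]; neither is
   fixed at [v]. *)
Lemma pinned_diff w : w \in I -> a0 w != a1 w.
Proof.
move=> wI; apply/negP => /eqP a01w.
case: a_pinned => A0 F0 A1 F1; have [a0v a1v] := pinned_at.
pose D := [set u | a0 u != a1 u].
have DI : D \subset I.
  by apply/subsetP => u; rewrite inE; apply: contraR => /pinned_out[-> ->].
have vD : v \in D by rewrite inE a0v a1v.
have [|x Ax Fx] := I_min (_ : D \proper I) a0.
  by rewrite properE DI /=; apply/subsetPn; exists w => //; rewrite inE a01w eqxx.
have xE : x = if x v then a1 else a0.
  apply: (f_uniq (I := D :\ v)).
  - move=> u; rewrite in_setD1 negb_and negbK => /orP[/eqP->|uD].
      by case: (x v); rewrite ?a0v ?a1v.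
    by rewrite Ax //; move: uD; rewrite inE negbK => /eqP; case: (x v).
  - by move=> u /setD1P[_ uD]; apply: Fx.
  - have DvIv : D :\ v \subset I :\ v by rewrite setSD.
    by case: (x v) => u /(subsetP DvIv); [apply: F1 | apply: F0].
by have := Fx v vD; rewrite {1}xE; case: (x v); rewrite ?f_pinned0 ?f_pinned1.
Qed.

Lemma lit_pinned_inside j m : j \in I -> m \in I -> arc f j m ->
  lit j m a0 = a0 m (+) (m == v).
Proof.
move=> jI mI a; have [->|mv] := eqVneq m v.
  by rewrite (proj1 pinned_at) lit_true // f_pinned0.
case: a_pinned => A0 F0 A1 F1; have mIv : m \in I :\ v by rewrite in_setD1 mv.
rewrite addbF; case a0m: (a0 m); first by apply: lit_true; rewrite F0.
have a1m : a1 m by have := pinned_diff mI; rewrite a0m; case: (a1 m).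
have /lit_true/(_ j) : f a1 m by rewrite F1.
by rewrite !litE //; have := pinned_diff jI; case: (a0 j); case: (a1 j); case: neg_arc.
Qed.

Lemma lit_pinned_outside j m : j \notin I -> m \in I -> lit j m a0.
Proof.
move=> jI mI; have [->|mv] := eqVneq m v; first exact: lit_true f_pinned0 j.
case: a_pinned => A0 F0 A1 F1; have mIv : m \in I :\ v by rewrite in_setD1 mv.
case a0m: (a0 m); first by apply: lit_true; rewrite F0.
have a1m : a1 m by have := pinned_diff mI; rewrite a0m; case: (a1 m).
have [o0 o1] := pinned_out jI; rewrite (eq_lit m (_ : a0 j = a1 j)) ?o0 ?o1 //.
by apply: lit_true; rewrite F1.
Qed.

Lemma in_pred_pinned : exists2 j, j \in I & arc f j v.
Proof.
have [j Lj] := lit_false f_pinned1; have /andP[a01j a] := lit_change (lit_true f_pinned0 j) Lj.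
by exists j => //; apply: contraR a01j => /pinned_out[-> ->].
Qed.

End Pinned.

Lemma in_pred_no_fixed v : v \in I -> exists2 j, j \in I & arc f j v.
Proof. by move=> vI; have [a0 [a1 /(in_pred_pinned vI)]] := pinned_fixed_exists vI. Qed.

(* Comparing the pinned fixed points [a] of [v] and [b] of [w], the parity of
   [a (+) b] flips along an arc into [m] exactly when [m] is [v] or [w]; around
   a cycle through [v] but not [w] this gives an odd number of flips. *)
Lemma arc_cycle_spans (c : seq V) (q : V -> V) : uniq c -> c != [::] -> {subset c <= I} ->
  {in c, forall a, q a = prev c a} -> {in I, forall v, arc f (q v) v} -> c =i I.
Proof.
move=> Uc c0 cI c_pred q_arc w; apply/idP/idP => [/cI //|wI]; apply: contraT => wc.
have [v vc] : exists v, v \in c by case: (c) c0 => // v c' _; exists v; rewrite mem_head.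
have vI := cI v vc.
have [a [a' Ha]] := pinned_fixed_exists vI; have [b [b' Hb]] := pinned_fixed_exists wI.
pose r u := a u (+) b u.
have r_arc j m : j \in I -> m \in I -> arc f j m -> r j (+) r m = (m == v) (+) (m == w).
  move=> jI mI jm; have := lit_pinned_inside vI Ha jI mI jm.
  have := lit_pinned_inside wI Hb jI mI jm; rewrite /r !litE //.
  by case: (a j); case: (b j); case: (a m); case: (b m); case: neg_arc;
     case: (m == v); case: (m == w).
have r_change : {in c, forall u, (r u != r (next c u)) = (u == prev c v)}.
  move=> u uc; have nc : next c u \in c by rewrite mem_next.
  have nw : (next c u == w) = false by apply: contraNF wc => /eqP<-.
  have un : arc f u (next c u) by have := q_arc _ (cI _ nc); rewrite c_pred // prev_next.
  have := r_arc _ _ (cI _ uc) (cI _ nc) un; rewrite nw addbF.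
  rewrite -(can2_eq (prev_next Uc) (next_prev Uc)) => <-.
  by case: (r u); case: (r _).
have := even_count_change_next r Uc; rewrite (eq_in_count r_change).
by rewrite (count_uniq_mem _ Uc) mem_prev vc.
Qed.

Lemma no_fixed_nonempty : I != set0.
Proof. by apply/negP => /eqP I0; apply: (@I_none x0) => // i; rewrite I0 inE. Qed.

(* Redirecting [pred_in I] at [t] to another in-neighbour [u] yields a map whose
   cycle, like that of [pred_in I], spans [I]; so the map is injective on [I],
   but [u] is also the image of [next c u]. *)
Lemma in_pred_unique_no_fixed j k v : j \in I -> k \in I -> v \in I ->
  arc f j v -> arc f k v -> j = k.
Proof.
have I0 := no_fixed_nonempty.
have p_in := pred_in_spec in_pred_no_fixed.
suff p_unique u t : u \in I -> t \in I -> arc f u t -> u = pred_in I t.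
  by move=> jI kI vI jv kv; rewrite (p_unique j v) // (p_unique k v).
move=> uI tI ut; apply: contraTeq isT => up; pose q s := if s == t then u else pred_in I s.
have q_in s : s \in I -> q s \in I /\ arc f (q s) s.
  by rewrite /q; case: eqP => [->|_ /p_in //].
have [c [Uc c0 cI c_pred]] := exists_prev_cycle I0 (fun s sI => (p_in s sI).1).
have cIe := arc_cycle_spans Uc c0 cI c_pred (fun s sI => (p_in s sI).2).
have [c' [Uc' c0' cI' c'_pred]] := exists_prev_cycle I0 (fun s sI => (q_in s sI).1).
have c'Ie := arc_cycle_spans Uc' c0' cI' c'_pred (fun s sI => (q_in s sI).2).
have wc : next c u \in c by rewrite mem_next cIe.
have pw : pred_in I (next c u) = u by rewrite c_pred // prev_next.
have wt : next c u != t by apply: contra_neq up => <-; rewrite pw.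
have : q (next c u) = q t by rewrite /q eqxx (negbTE wt).
rewrite !c'_pred ?c'Ie ?(cI _ wc) // => /(can_inj (next_prev Uc')) E.
by rewrite E eqxx in wt.
Qed.

Lemma no_fixed_cycle : exists c : seq V,
  [/\ is_cycle f c, chordless f c & forall v, ~~ delocalizing f c v].
Proof.
have I0 := no_fixed_nonempty.
have [c [Uc c0 cI c_pred]] := pred_in_cycle in_pred_no_fixed I0.
have cIe : c =i I.
  exact: arc_cycle_spans Uc c0 cI c_pred (fun v vI => (pred_in_spec in_pred_no_fixed vI).2).
have [v vI] := set0Pn _ I0; have [a0 [a1 Ha]] := pinned_fixed_exists vI.
exists c; apply: (pred_in_cycle_local in_pred_no_fixed in_pred_unique_no_fixed) => //.
exact: lit_pinned_outside vI Ha.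
Qed.

End NoFixedPoint.

Definition pos_cycles_delocalized := forall c : seq V,
  is_cycle f c -> positive_cycle f c -> chordless f c -> exists v, delocalizing f c v.
Definition cycles_delocalized := forall c : seq V,
  is_cycle f c -> chordless f c -> exists v, delocalizing f c v.

Lemma unique_exists_fixedP : unique_fixed /\ exists_fixed <->
  (forall (I : {set V}) (z : {ffun {v : V | v \in ~: I} -> bool}), I != set0 ->
     exists! y, subnet f z y = y).
Proof.
split=> [[/unique_fixedP U /exists_fixedP Ex] I z I0 | H].
  have [y Fy] := Ex I z I0; exists y; split=> // y' Fy'; exact: U Fy Fy'.
split.
  apply/unique_fixedP => I z I0 y1 y2 F1 F2; have [y [_ Uy]] := H I z I0.
  by rewrite -(Uy _ F1) -(Uy _ F2).
by apply/exists_fixedP => I z I0; have [y [Fy _]] := H I z I0; exists y.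
Qed.

Lemma pos_cycles_unique_fixed : pos_cycles_delocalized -> unique_fixed.
Proof.
move=> deloc I; elim/proper_ind: I => I IH x1 x2 A F1 F2.
apply/eqP/negPn/negP => x12.
pose D := [set v | x1 v != x2 v].
have DI : D \subset I by apply/subsetP => v; rewrite inE; apply: contraR => /A->.
have [DpI|] := boolP (D \proper I).
  move/eqP: x12; apply; apply: (IH D DpI) => [v|v /(subsetP DI)|v /(subsetP DI)].
  - by rewrite inE negbK => /eqP.
  - exact: F1.
  - exact: F2.
rewrite properEneq DI andbT negbK => /eqP DeI.
have x12_diff v : (x1 v != x2 v) = (v \in I) by rewrite -DeI inE.
have I0 : I != set0.
  apply: contraNneq x12 => I0; apply/eqP/ffunP => v; apply/eqP.
  by rewrite -[_ == _]negbK x12_diff I0 inE.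
have [c [c_cycle c_pos c_chordless c_local]] := two_fixed_cycle x12_diff F1 F2 IH I0.
by have [v] := deloc c c_cycle c_pos c_chordless; rewrite (negbTE (c_local v)).
Qed.

Lemma cycles_exists_fixed : unique_fixed -> cycles_delocalized -> exists_fixed.
Proof.
move=> U deloc I; elim/proper_ind: I => I IH x0.
have [/existsP[x /andP[/forallP A /forallP F]] | none] := boolP [exists x : config V,
    [forall v, (v \notin I) ==> (x v == x0 v)] &&
    [forall i, (i \in I) ==> (f x i == x i)]].
  exists x => [v vI | i iI]; apply/eqP; first exact: implyP (A v) vI.
  exact: implyP (F i) iI.
have I_none x : agree I x x0 -> ~ fixed_on I x.
  move=> Ax Fx; move/existsP: none; apply; exists x.
  apply/andP; split; apply/forallP => v; apply/implyP => vI; apply/eqP.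
    exact: Ax.
  exact: Fx.
have [c [c_cycle c_chordless c_local]] := no_fixed_cycle U I_none IH.
by have [v] := deloc c c_cycle c_chordless; rewrite (negbTE (c_local v)).
Qed.

Lemma unique_fixed_pos_cycles : unique_fixed <-> pos_cycles_delocalized.
Proof.
split=> [U c c_cycle c_pos c_chordless | ]; last exact: pos_cycles_unique_fixed.
have [/existsP // | /existsPn c_local] := boolP [exists v, delocalizing f c v].
by case: (pos_cycle_two_fixed c_cycle c_chordless c_local c_pos U).
Qed.

Lemma unique_exists_fixed_cycles : unique_fixed /\ exists_fixed <-> cycles_delocalized.
Proof.
split=> [[U Ex] c c_cycle c_chordless | deloc].
  have [c_pos | c_neg] := boolP (positive_cycle f c).
    exact: (proj1 unique_fixed_pos_cycles U).
  have [/existsP // | /existsPn c_local] := boolP [exists v, delocalizing f c v].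
  by case: (neg_cycle_no_fixed c_cycle c_chordless c_local c_neg Ex).
have U : unique_fixed by apply/unique_fixed_pos_cycles => c c_cycle _; apply: deloc.
by split; last exact: cycles_exists_fixed.
Qed.

End AndNet.

Theorem corollary12 (V : finType) (HV : 0 < #|V|) (f : network V) :
  and_net f ->
  ((forall (I : {set V}) (z : {ffun {v : V | v \in ~: I} -> bool}),
      I != set0 -> exists! y, subnet f z y = y)
   <-> (forall c : seq V, is_cycle f c -> chordless f c ->
          exists v, delocalizing f c v))
  /\
  ((forall (I : {set V}) (z : {ffun {v : V | v \in ~: I} -> bool}),
      I != set0 -> forall y1 y2, subnet f z y1 = y1 -> subnet f z y2 = y2 -> y1 = y2)
   <-> (forall c : seq V, is_cycle f c -> positive_cycle f c -> chordless f c ->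
          exists v, delocalizing f c v)).
Proof.
move=> f_and; split.
  exact: iff_trans (iff_sym (unique_exists_fixedP f)) (unique_exists_fixed_cycles f_and).
exact: iff_trans (iff_sym (unique_fixedP f)) (unique_fixed_pos_cycles f_and).
Qed.
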